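(* Let $d\geq 2$. Every antipodal configuration $\omega_{2d}=\{\mathbf x_1,\ldots,\mathbf x_{2d}\}$ of $2d$ points on $S^{d-1}\subset\mathbb R^d$ is centered, i.e. there exists $\mathbf y\in S^{d-1}$ with $-\frac{1}{\sqrt d}\leq \mathbf y\cdot\mathbf x_i\leq\frac1{\sqrt d}$ for all $i=1,\ldots,2d$.
   Context: $S^{d-1}$ is the unit sphere in $\mathbb R^d$. A configuration is a list of points (points may coincide). A configuration on $S^{d-1}$ is antipodal if together with a point $\mathbf x$ it contains $-\mathbf x$. *)

From mathcomp Require Import all_boot all_order all_algebra.
From mathcomp Require Import reals.
Set Implicit Arguments. Unset Strict Implicit. Unset Printing Implicit Defensive.
Import Order.TTheory GRing.Theory Num.Theory.
Local Open Scope ring_scope.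

Definition dotv (R : realType) (d : nat) (u v : 'rV[R]_d) : R :=
  \sum_(i < d) u 0 i * v 0 i.

Definition on_sphere (R : realType) (d : nat) (x : 'rV[R]_d) : Prop :=
  dotv x x = 1.

(* a configuration of n points on the sphere (points may coincide) *)
Definition sphere_config (R : realType) (d n : nat) (X : 'I_n -> 'rV[R]_d) : Prop :=
  forall i, on_sphere (X i).

Definition antipodal (R : realType) (d n : nat) (X : 'I_n -> 'rV[R]_d) : Prop :=
  forall i, exists j, X j = - X i.

Definition centered (R : realType) (d n : nat) (X : 'I_n -> 'rV[R]_d) : Prop :=
  exists y : 'rV[R]_d, on_sphere y /\
    forall i, - (Num.sqrt (d%:R))^-1 <= dotv y (X i) <= (Num.sqrt (d%:R))^-1.

(* Keep one point u_k of each antipodal pair (at most d of them, padded with 0).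
   If the u_k are linearly dependent, a unit vector orthogonal to all of them
   works.  Otherwise let c_j be the dual basis, c_j . u_k = delta_jk; signs
   chosen greedily give w = sum_j s_j c_j with |w|^2 >= sum_j |c_j|^2 and
   w . u_k = s_k = +-1.  Expanding sum_j |u_j - c_j|^2 >= 0 with |u_j| <= 1 and
   sum_j c_j . u_j = d gives sum_j |c_j|^2 >= d, so y = w / |w| satisfies
   |y . u_k| <= 1 / sqrt d. *)

From mathcomp Require Import all_boot all_order all_algebra.
From mathcomp Require Import reals.
From mathcomp Require Import zify lra.
Set Implicit Arguments.
Unset Strict Implicit.
Unset Printing Implicit Defensive.
Import Order.TTheory GRing.Theory Num.Theory.
Local Open Scope ring_scope.

Section DotProduct.
Variables (R : realType) (d : nat).
Implicit Types (u v w : 'rV[R]_d) (a : R).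

Lemma dotvC u v : dotv u v = dotv v u.
Proof. by apply: eq_bigr => i _; rewrite mulrC. Qed.

Lemma dotvDl u v w : dotv (u + v) w = dotv u w + dotv v w.
Proof. by rewrite /dotv -big_split; apply: eq_bigr => i _; rewrite mxE mulrDl. Qed.

Lemma dotvDr u v w : dotv u (v + w) = dotv u v + dotv u w.
Proof. by rewrite dotvC dotvDl !(dotvC u). Qed.

Lemma dotvZl a u v : dotv (a *: u) v = a * dotv u v.
Proof. by rewrite /dotv mulr_sumr; apply: eq_bigr => i _; rewrite mxE mulrA. Qed.

Lemma dotvZr a u v : dotv u (a *: v) = a * dotv u v.
Proof. by rewrite dotvC dotvZl dotvC. Qed.

Lemma dotvNl u v : dotv (- u) v = - dotv u v.
Proof. by rewrite -scaleN1r dotvZl mulN1r. Qed.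

Lemma dotvNr u v : dotv u (- v) = - dotv u v.
Proof. by rewrite dotvC dotvNl dotvC. Qed.

Lemma dotv0l v : dotv 0 v = 0.
Proof. by rewrite /dotv big1 // => i _; rewrite mxE mul0r. Qed.

Lemma dotv_suml I (r : seq I) (P : pred I) (F : I -> 'rV[R]_d) v :
  dotv (\sum_(i <- r | P i) F i) v = \sum_(i <- r | P i) dotv (F i) v.
Proof. by elim/big_rec2: _ => [|i y x _ <-]; rewrite ?dotv0l ?dotvDl. Qed.

Lemma dotv_ge0 u : 0 <= dotv u u.
Proof. by apply: sumr_ge0 => i _; rewrite -expr2 sqr_ge0. Qed.

Lemma dotv_eq0 u : (dotv u u == 0) = (u == 0).
Proof.
apply/eqP/eqP => [u0|->]; last exact: dotv0l.
apply/rowP => i; rewrite mxE; apply/eqP; rewrite -sqrf_eq0 expr2; apply/eqP.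
by move/psumr_eq0P: u0; apply=> // j _; rewrite -expr2 sqr_ge0.
Qed.

Lemma on_sphere_normalize w : w != 0 ->
  on_sphere ((Num.sqrt (dotv w w))^-1 *: w).
Proof.
rewrite -dotv_eq0 => w0; have wpos : 0 < dotv w w by rewrite lt0r w0 dotv_ge0.
rewrite /on_sphere dotvZl dotvZr mulrA -expr2 exprVn sqr_sqrtr ?dotv_ge0 //.
by rewrite mulVf.
Qed.

Lemma exists_signs_dotv_sum_ge n (c : 'I_n -> 'rV[R]_d) :
  exists s : 'I_n -> R, (forall j, `|s j| = 1) /\
    \sum_j dotv (c j) (c j) <= dotv (\sum_j s j *: c j) (\sum_j s j *: c j).
Proof.
elim: n c => [|n IHn] c.
  by exists (fun=> 1); split=> [j|]; rewrite ?normr1 // big_ord0 dotv_ge0.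
have [s [s1 le_s]] := IHn (fun j => c (widen_ord (leqnSn n) j)).
set w := \sum_j s j *: _ in le_s; set x := c ord_max.
(* the new sign is chosen so that the cross term [2 sg (w . x)] is nonnegative *)
pose sg : R := if 0 <= dotv w x then 1 else -1.
have sg_sq : sg * sg = 1 by rewrite /sg; case: ifP; rewrite ?mulr1 ?mulrNN ?mulr1.
have sg_cross : 0 <= sg * dotv w x.
  by rewrite /sg; case: (leP 0 (dotv w x)) => [|/ltW]; rewrite ?mul1r ?mulN1r ?oppr_ge0.
exists (fun j => oapp s sg (unlift ord_max j)); split.
  move=> j; case: unliftP => [k _|_] /=; first exact: s1.
  by rewrite /sg; case: ifP; rewrite ?normrN normr1.
rewrite !big_ord_recr /= unlift_none /= -/x.
have -> : \sum_(j < n) oapp s sg (unlift ord_max (widen_ord (leqnSn n) j)) *: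
             c (widen_ord (leqnSn n) j) = w.
  apply: eq_bigr => j _; congr (_ *: _).
  have -> : widen_ord (leqnSn n) j = lift ord_max j.
    by apply: val_inj; rewrite [RHS]lift_max.
  by rewrite liftK.
rewrite dotvDl !dotvDr !dotvZl !dotvZr (dotvC x) mulrA sg_sq mul1r.
lra.
Qed.

Lemma dotv_row_trmx_mulmx (A B : 'M[R]_d) j k :
  dotv (row j B^T) (row k A) = (A *m B) k j.
Proof. by rewrite !mxE; apply: eq_bigr => i _; rewrite !mxE mulrC. Qed.

Lemma mulmx1_sum_dotv_trmx_ge (A B : 'M[R]_d) :
  A *m B = 1%:M -> (forall k, dotv (row k A) (row k A) <= 1) ->
  d%:R <= \sum_j dotv (row j B^T) (row j B^T).
Proof.
move=> AB1 A1; set a := fun j => row j A; set b := fun j => row j B^T.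
have ab_trace : \sum_j dotv (b j) (a j) = d%:R.
  under eq_bigr do rewrite dotv_row_trmx_mulmx AB1 mxE eqxx.
  by rewrite sumr_const card_ord.
have a_le : \sum_j dotv (a j) (a j) <= d%:R.
  by rewrite -[X in X%:R]card_ord -sumr_const; apply: ler_sum => j _; apply: A1.
(* trace(AB) = d bounds the Frobenius norm of B from below through |A - B^T|^2 >= 0 *)
have : 0 <= \sum_j dotv (a j - b j) (a j - b j).
  by apply: sumr_ge0 => j _; apply: dotv_ge0.
under eq_bigr do rewrite dotvDl !dotvDr !dotvNl !dotvNr opprK (dotvC (a _) (b _)).
rewrite !big_split /= !sumrN ab_trace; lra.
Qed.

Lemma exists_dual_signed_vector (U : 'M[R]_d) :
  U \in unitmx -> (forall k, dotv (row k U) (row k U) <= 1) ->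
  exists w, d%:R <= dotv w w /\ forall k, `|dotv w (row k U)| = 1.
Proof.
move=> U_unit U1; have UV1 := mulmxV U_unit.
have [s [s1 le_s]] := exists_signs_dotv_sum_ge (fun j => row j (invmx U)^T).
exists (\sum_j s j *: row j (invmx U)^T); split.
  exact: le_trans (mulmx1_sum_dotv_trmx_ge UV1 U1) le_s.
move=> k; rewrite dotv_suml (bigD1 k) //= big1 => [|j jk].
  by rewrite dotvZl dotv_row_trmx_mulmx UV1 mxE eqxx mulr1 addr0 s1.
by rewrite dotvZl dotv_row_trmx_mulmx UV1 mxE eq_sym (negbTE jk) mulr0.
Qed.

Lemma exists_sphere_orthogonal_rows (U : 'M[R]_d) :
  U \notin unitmx -> exists y, on_sphere y /\ forall k, dotv y (row k U) = 0.
Proof.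
rewrite unitmxE unitfE negbK -det_tr => /det0P[v v0 vU0].
exists ((Num.sqrt (dotv v v))^-1 *: v); split; first exact: on_sphere_normalize.
move=> k; rewrite dotvZl; have -> : dotv v (row k U) = (v *m U^T) 0 k.
  by rewrite !mxE; apply: eq_bigr => i _; rewrite !mxE.
by rewrite vU0 mxE mulr0.
Qed.

Lemma exists_sphere_dotv_le_invsqrt (u : 'I_d -> 'rV[R]_d) : (0 < d)%N ->
  (forall k, dotv (u k) (u k) <= 1) ->
  exists y, on_sphere y /\ forall k, `|dotv y (u k)| <= (Num.sqrt d%:R)^-1.
Proof.
move=> d_gt0 u1; pose U := \matrix_k u k.
have rowU k : row k U = u k by rewrite rowK.
have U1 k : dotv (row k U) (row k U) <= 1 by rewrite rowU.
have invsqrt_ge0 : 0 <= (Num.sqrt d%:R)^-1 :> R by rewrite invr_ge0 sqrtr_ge0.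
have [U_unit | U_sing] := boolP (U \in unitmx); last first.
  have [y [y1 yU0]] := exists_sphere_orthogonal_rows U_sing.
  by exists y; split=> // k; rewrite -rowU yU0 normr0.
have [w [d_le_w w1]] := exists_dual_signed_vector U_unit U1.
have w_gt0 : 0 < dotv w w by apply: lt_le_trans d_le_w; rewrite ltr0n.
exists ((Num.sqrt (dotv w w))^-1 *: w); split.
  by apply: on_sphere_normalize; rewrite -dotv_eq0 gt_eqF.
move=> k; rewrite dotvZl normrM -rowU w1 mulr1 ger0_norm ?invr_ge0 ?sqrtr_ge0 //.
by rewrite lef_pV2 ?posrE ?sqrtr_gt0 ?ltr0n // ler_sqrt // ltW.
Qed.

End DotProduct.

Section OppRepresentatives.
Variable V : zmodType.
Implicit Type T : seq V.

Definition opp_representatives T := [seq x <- T | (index x T < index (- x) T)%N].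

Lemma size_opp_representatives T : uniq T -> {in T, forall x, - x \in T} ->
  (2 * size (opp_representatives T) <= size T)%N.
Proof.
move=> T_uniq T_opp; set p := fun x => (index x T < index (- x) T)%N.
rewrite -(count_predC p T) -size_filter mul2n -addnn leq_add2l -size_filter.
rewrite -(size_map -%R); apply: uniq_leq_size.
  by rewrite map_inj_uniq ?filter_uniq //; apply: oppr_inj.
move=> y /mapP[x]; rewrite mem_filter => /andP[px xT] ->.
by rewrite mem_filter T_opp // andbT /= /p opprK -leqNgt ltnW.
Qed.

Lemma opp_representativesP T x :
  {in T, forall y, - y \in T} -> {in T, forall y, y != - y} -> x \in T ->
  (x \in opp_representatives T) || (- x \in opp_representatives T).
Proof.
move=> T_opp T_ne xT; rewrite !mem_filter xT T_opp // opprK !andbT.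
rewrite -neq_ltn; apply: contra (T_ne x xT) => /eqP same_index.
by rewrite -{1}(nth_index x xT) same_index nth_index ?T_opp.
Qed.

End OppRepresentatives.

Lemma antipodal_signed_cover (R : realType) (d n : nat) (X : 'I_n -> 'rV[R]_d) :
  (n <= 2 * d)%N -> sphere_config X -> antipodal X ->
  exists u : 'I_d -> 'rV[R]_d, (forall k, dotv (u k) (u k) <= 1) /\
    forall i, exists k, X i = u k \/ X i = - u k.
Proof.
move=> n_le X1 X_anti; set T := undup (codom X).
have memT x : (x \in T) = (x \in codom X) by rewrite mem_undup.
have T_opp : {in T, forall x, - x \in T}.
  move=> x; rewrite memT => /codomP[i ->]; have [j <-] := X_anti i.
  by rewrite memT codom_f.
have T_ne : {in T, forall x, x != - x}.
  move=> x; rewrite memT => /codomP[i ->]; apply/eqP => Xi_opp.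
  by have := X1 i; rewrite /on_sphere {2}Xi_opp dotvNr X1; lra.
set H := opp_representatives T.
have size_H : (size H <= d)%N.
  have : (2 * size H <= size T)%N := size_opp_representatives (undup_uniq _) T_opp.
  have : (size T <= n)%N by rewrite -[n]card_ord -(size_codom X) size_undup.
  lia.
exists (fun k => H`_k); split=> [k | i].
  have [kH | Hk] := ltnP k (size H); last by rewrite nth_default ?dotv0l.
  have : H`_k \in T by have := mem_nth 0 kH; rewrite mem_filter => /andP[].
  by rewrite memT => /codomP[i ->]; rewrite X1.
have XiT : X i \in T by rewrite memT codom_f.
have /orP[XiH | XiH] := opp_representativesP T_opp T_ne XiT.
  have k_lt : (index (X i) H < d)%N by rewrite (leq_trans _ size_H) ?index_mem.
  by exists (Ordinal k_lt); left; rewrite nth_index.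
have k_lt : (index (- X i) H < d)%N by rewrite (leq_trans _ size_H) ?index_mem.
by exists (Ordinal k_lt); right; rewrite nth_index ?opprK.
Qed.

Theorem corollary3p2 (R : realType) (d : nat) (hd : (2 <= d)%N)
  (X : 'I_(2 * d) -> 'rV[R]_d) :
  sphere_config X -> antipodal X -> centered X.
Proof.
move=> X1 X_anti.
have [u [u1 X_u]] := antipodal_signed_cover (leqnn _) X1 X_anti.
have [y [y1 y_u]] := exists_sphere_dotv_le_invsqrt (ltnW hd) u1.
exists y; split=> // i; rewrite -ler_norml.
by have [k [-> | ->]] := X_u i; rewrite ?dotvNr ?normrN y_u.
Qed.
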